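(* Let $G$ be a graph with $4\le |V(G)|\le 5$ and $E(G)\ne\emptyset$. Then $\varphi_r(G-v)=\varphi_r(G)+\lfloor |V(G)|/2\rfloor-2$ for every vertex $v\in V(G)$ if and only if $G$ contains two edges with no common endpoint but contains no induced subgraph that is a minimal b-$3$-atom.
   Context: A proper $k$-coloring of $G$ is a surjective map $c:V(G)\to\{1,\ldots,k\}$ with $c(u)\ne c(v)$ for every edge $uv$. In a proper $k$-coloring, a vertex of color $i$ is a b-vertex if it has a neighbor of every color $j\ne i$. A b-$k$-coloring is a proper $k$-coloring in which every color class contains a b-vertex; $\varphi(G)$ is the largest $k$ such that $G$ has a b-$k$-coloring, and $\varphi_r(G)=\max\{\varphi(H): H\text{ an induced subgraph of }G\}$. A b-$t$-atom is a graph $A$ whose vertex set can be partitioned into $t$ sets $D_1,\ldots,D_t$, each $D_i$ containing a special vertex $c_i$, such that each $D_i$ is independent with $|D_i|\le t$ and, for all $i\ne j$, $c_i$ has a neighbor in $D_j$; it is minimal if no proper induced subgraph of it is a b-$t$-atom. *)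

(* Simple graphs: a symmetric irreflexive relation e on a finType T.
   Induced subgraphs are represented by their vertex sets S : {set T}. *)
From mathcomp Require Import all_boot.
Set Implicit Arguments. Unset Strict Implicit. Unset Printing Implicit Defensive.

Section BColor.
Variables (T : finType) (e : rel T).

Definition simple_graph : Prop := symmetric e /\ irreflexive e.

(* Colors are natural numbers 1..k stored in 'I_(#|T|.+1); since a surjective
   k-coloring of S needs k <= #|S| <= #|T|, every k-coloring is representable. *)
Definition color := 'I_(#|T|.+1).

Definition is_bcoloring (S : {set T}) (k : nat) (c : {ffun T -> color}) : bool :=
  [&& [forall x in S, (0 < c x <= k)%N],
      [forall i : color, (0 < i <= k)%N ==> [exists x in S, c x == i]],
      [forall x in S, forall y in S, e x y ==> (c x != c y)] &
      [forall i : color, (0 < i <= k)%N ==>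
         [exists x in S, (c x == i) &&
            [forall j : color, ((0 < j <= k)%N && (j != i)) ==>
               [exists y in S, e x y && (c y == j)]]]]].

Definition b_colorable (S : {set T}) (k : nat) : bool :=
  [exists c : {ffun T -> color}, is_bcoloring S k c].

Definition bchrom (S : {set T}) : nat :=
  \max_(k < #|T|.+1 | b_colorable S k) k.

Definition bchrom_r (S : {set T}) : nat :=
  \max_(A in powerset S) bchrom A.

Definition b_atom (S : {set T}) (t : nat) : bool :=
  [exists D : {ffun 'I_t -> {set T}}, exists cv : {ffun 'I_t -> T},
    [&& [forall x, (x \in S) == [exists i, x \in D i]],
        [forall i, forall j, (i != j) ==> [disjoint D i & D j]],
        [forall i, cv i \in D i],
        [forall i, forall x in D i, forall y in D i, ~~ e x y],
        [forall i, #|D i| <= t] &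
        [forall i, forall j, (i != j) ==> [exists y in D j, e (cv i) y]]]].

Definition minimal_b_atom (S : {set T}) (t : nat) : bool :=
  b_atom S t && [forall A : {set T}, (A \proper S) ==> ~~ b_atom A t].

End BColor.

From mathcomp Require Import all_boot zify.
From Stdlib Require Import Classical.
Set Implicit Arguments. Unset Strict Implicit. Unset Printing Implicit Defensive.

(* For 4 <= n <= 5 the shift floor(n/2) - 2 vanishes, so the condition reads
   phi_r(G - v) = phi_r(G) for every v. A b-colouring with k >= 3 colours
   contains a b-3-atom (its b-vertices of colours 1, 2, 3 with their
   witnessing neighbours), and an atom is b-coloured by its classes; hence
   phi_r <= 2 exactly when there is no (minimal) b-3-atom, and then two
   disjoint edges keep phi_r(G - v) = phi_r(G) = 2.
   Conversely, let phi_r(G - v) = p >= 3 for all v. On the at most 4 <= p + 1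
   vertices of G - v the b-vertices of a b-p-colouring are pairwise adjacent,
   so every G - v contains a K_p; with n <= 5 this yields a K_(p+1) in G,
   contradicting phi_r(G) = p. So p = 2: there is no b-3-atom, and if all
   edges met pairwise, an edge xy and the edges surviving the deletion of x
   and of y would close a triangle. *)

Section BColorings.
Variables (T : finType) (e : rel T).
Hypotheses (esym : symmetric e) (eirr : irreflexive e).

Definition clique (B : {set T}) : Prop := {in B &, forall x y, x != y -> e x y}.

Lemma clique_setU1 (w : T) (B : {set T}) :
  clique B -> {in B, forall y, e w y} -> clique (w |: B).
Proof.
move=> cB wB x y; rewrite !inE => /predU1P[-> | xB] /predU1P[-> | yB].
- by rewrite eqxx.
- by move=> _; apply: wB.
- by move=> _; rewrite esym; apply: wB.
- exact: cB.
Qed.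

Lemma clique2 (x y : T) : e x y -> clique [set x; y].
Proof.
move=> exy a b; rewrite !inE => /pred2P[] -> /pred2P[] ->; rewrite ?eqxx //.
by rewrite esym.
Qed.

Lemma edge_neq (x y : T) : e x y -> x != y.
Proof. by apply: contraTneq => ->; rewrite eirr. Qed.

(* Colours are the integers [1..k] and [c] is only relevant on [A];
   surjectivity is implied by the b-vertex of each colour. *)
Definition bvertex (A : {set T}) (k : nat) (c : T -> nat) (x : T) : Prop :=
  forall j, 0 < j <= k -> j != c x -> exists2 y, y \in A & e x y /\ c y = j.

Definition bcoloring (A : {set T}) (k : nat) (c : T -> nat) : Prop :=
  [/\ {in A, forall x, 0 < c x <= k},
      {in A &, forall x y, e x y -> c x != c y} &
      forall i, 0 < i <= k -> exists2 x, x \in A & c x = i /\ bvertex A k c x].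

Lemma leq_colors_card (S : {set T}) (k : nat) (c : T -> nat) :
  (forall i, 0 < i <= k -> exists2 x, x \in S & c x = i) -> k <= #|S|.
Proof.
elim: k S => [//|k IH] S cover.
have [x xS cx] := cover k.+1 (leqnn _).
rewrite (cardsD1 x S) xS add1n ltnS; apply: IH => i ik.
have [y yS cy] := cover i ltac:(lia).
exists y => //; rewrite !inE yS andbT.
by apply: contraTneq ik => yx; rewrite -cy yx cx; lia.
Qed.

Lemma bcoloring_card (A : {set T}) k c : bcoloring A k c -> k <= #|A|.
Proof.
move=> [_ _ bv]; apply: (leq_colors_card (c := c)) => i ik.
by have [x xA [cx _]] := bv i ik; exists x.
Qed.

(* Two non-adjacent b-vertices force a second vertex in each of their
   colour classes, so [A] would have at least [k + 2] vertices. *)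
Lemma bvertex_adj (A : {set T}) k c x y :
  bcoloring A k c -> #|A| <= k.+1 -> x \in A -> y \in A ->
  bvertex A k c x -> bvertex A k c y -> c x != c y -> e x y.
Proof.
move=> [cA _ bv] Ak xA yA bvx bvy cxy; apply: contraTT Ak => nexy.
have yx : y != x by apply: contraNneq cxy => ->.
have nx : forall z, e y z -> z != x.
  by move=> z eyz; apply: contraNneq nexy => zx; rewrite esym -zx.
have ny : forall z, e x z -> z != y by move=> z; apply: contraTneq => ->.
suff : k <= #|A :\ x :\ y|.
  by rewrite (cardsD1 x A) xA (cardsD1 y (A :\ x)) !inE yx yA; lia.
have inD z : z \in A -> z != x -> z != y -> z \in A :\ x :\ y.
  by move=> zA zx zy; rewrite !inE zA zx zy.
apply: (leq_colors_card (c := c)) => i ik.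
have [xcol | nxcol] := eqVneq i (c x).
  have [z zA [eyz cz]] := bvy i ik ltac:(by rewrite xcol).
  by exists z => //; apply: inD => //; [exact: nx | rewrite eq_sym edge_neq].
have [ycol | nycol] := eqVneq i (c y).
  have [z zA [exz cz]] := bvx i ik ltac:(by rewrite ycol eq_sym).
  by exists z => //; apply: inD => //; [rewrite eq_sym edge_neq | exact: ny].
have [z zA [cz _]] := bv i ik.
exists z => //; apply: inD => //; apply/eqP => zxy.
  by move: nxcol; rewrite -cz zxy eqxx.
by move: nycol; rewrite -cz zxy eqxx.
Qed.

Lemma bcoloring_clique (A : {set T}) k c m :
  bcoloring A k c -> #|A| <= k.+1 -> m <= k ->
  exists B : {set T}, [/\ B \subset A, clique B & #|B| = m].
Proof.
move=> colA Ak; have [cA _ bv] := colA.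
suff : m <= k -> exists B : {set T}, [/\ B \subset A, clique B, #|B| = m &
         {in B, forall x, bvertex A k c x /\ c x <= m}].
  by move=> H /H [B [BA cB cardB _]]; exists B.
elim: m => [|m IH] mk.
  by exists set0; split; rewrite ?sub0set ?cards0 // => x; rewrite inE.
have [B [BA cB cardB bvB]] := IH (ltnW mk).
have [x xA [cx bvx]] := bv m.+1 ltac:(lia).
have xB : x \notin B by apply: contraL (leqnn m.+1) => /bvB [_]; rewrite cx; lia.
exists (x |: B); split.
- by rewrite subUset sub1set xA.
- apply: clique_setU1 => // y yB; have [bvy cy] := bvB y yB.
  apply: (bvertex_adj colA) => //; [exact: (subsetP BA) | by rewrite cx; lia].
- by rewrite cardsU1 xB cardB.
- move=> y /setU1P[-> | /bvB [bvy cy]]; first by rewrite cx.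
  by split; last exact: leqW.
Qed.

Lemma clique_bcoloring (B : {set T}) :
  clique B -> exists c, bcoloring B #|B| c.
Proof.
move=> cB; set s := enum B; have sB : size s = #|B| by rewrite cardE.
exists (fun x => (index x s).+1); split.
- by move=> x xB; rewrite /= -sB index_mem mem_enum.
- move=> x y xB yB exy; rewrite eqSS; apply: contraTneq exy => ixy.
  by rewrite (index_inj x _ _ ixy) ?eirr ?mem_enum.
- move=> i /andP[i0 iB]; have [x0 _] : exists x0, x0 \in B.
    by apply/card_gt0P; lia.
  have nthB j : 0 < j <= #|B| -> nth x0 s j.-1 \in B /\ (index (nth x0 s j.-1) s).+1 = j.
    move=> /andP[j0 jB]; have js : j.-1 < size s by rewrite sB; lia.
    by rewrite -mem_enum mem_nth // index_uniq ?enum_uniq // prednK.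
  have [xB cx] := nthB i ltac:(lia).
  exists (nth x0 s i.-1) => //; split => // j jr; rewrite cx => ji.
  have [yB cy] := nthB j jr; exists (nth x0 s j.-1) => //; split => //.
  by apply: cB => //; apply: contra_neq ji => xy; rewrite -cx -cy xy.
Qed.

Lemma b_colorableP (S : {set T}) k :
  k <= #|T| -> b_colorable e S k <-> exists c, bcoloring S k c.
Proof.
move=> kT; have inK i : 0 < i <= k -> (inord i : color T) = i :> nat.
  by move=> ik; rewrite inordK //; lia.
split.
  case/existsP=> c /and4P[/forallP cS _ /forallP cP /forallP cB].
  exists (fun x => nat_of_ord (c x)); split.
  - by move=> x xS; have /implyP := cS x; apply.
  - move=> x y xS yS exy; have /implyP/(_ xS)/forallP/(_ y)/implyP/(_ yS) := cP x.
    by move=> /implyP/(_ exy).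
  move=> i ik; have /implyP := cB (inord i); rewrite inK // => /(_ ik).
  case/existsP=> x /and3P[xS /eqP cx /forallP bx]; exists x => //.
  split=> [|j jk ji]; first by rewrite cx inK.
  rewrite cx inK // in ji.
  have /implyP := bx (inord j); rewrite -(inj_eq val_inj) /= !inK // jk ji.
  by move=> /(_ isT) /existsP[y /and3P[yS exy /eqP cy]]; exists y; rewrite // cy inK.
move=> [c [cS cP cB]]; have cK x : x \in S -> (inord (c x) : color T) = c x :> nat.
  by move=> xS; apply: inK; apply: cS.
apply/existsP; exists [ffun x => inord (c x)]; apply/and4P; split.
- by apply/forallP=> x; apply/implyP=> xS; rewrite ffunE cK // cS.
- apply/forallP=> i; apply/implyP=> ik; have [x xS [cx _]] := cB i ik.
  by apply/existsP; exists x; rewrite xS ffunE -(inj_eq val_inj) /= cK // cx.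
- apply/forallP=> x; apply/implyP=> xS; apply/forallP=> y; apply/implyP=> yS.
  by apply/implyP=> exy; rewrite !ffunE -(inj_eq val_inj) /= !cK // cP.
apply/forallP=> i; apply/implyP=> ik; have [x xS [cx bx]] := cB i ik.
apply/existsP; exists x; rewrite xS ffunE -(inj_eq val_inj) /= cK // cx eqxx /=.
apply/forallP=> j; apply/implyP=> /andP[jk ji].
have [y yS [exy cy]] := bx j jk ltac:(by rewrite cx).
by apply/existsP; exists y; rewrite yS exy ffunE -(inj_eq val_inj) /= cK // cy.
Qed.

Lemma leq_bchrom_r (S A : {set T}) k c :
  A \subset S -> bcoloring A k c -> k <= bchrom_r e S.
Proof.
move=> AS colA; have kT : k < #|T|.+1.
  by rewrite ltnS (leq_trans (bcoloring_card colA)) ?max_card.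
have bA : b_colorable e A k by apply/(b_colorableP _ kT); exists c.
have AP : A \in powerset S by rewrite powersetE.
apply: leq_trans (leq_bigmax_cond (F := bchrom e) A AP).
exact: (leq_bigmax_cond (F := fun k : 'I_#|T|.+1 => nat_of_ord k) (Ordinal kT)).
Qed.

Lemma bchrom_r_witness (S : {set T}) :
  exists (A : {set T}) c, A \subset S /\ bcoloring A (bchrom_r e S) c.
Proof.
have ne : 0 < #|powerset S| by apply/card_gt0P; exists set0; rewrite powersetE sub0set.
have [A] := eq_bigmax_cond (bchrom e) ne.
rewrite powersetE /bchrom_r /bchrom => AS ->.
have [none | /(eq_bigmax_cond (fun k : 'I_#|T|.+1 => nat_of_ord k)) [k bk ->]] :=
  posnP #|[pred k : 'I_#|T|.+1 | b_colorable e A k]|.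
  rewrite big_pred0; last exact: card0_eq none.
  by exists set0, (fun=> 0); split; [exact: sub0set | split=> [x|x y|i]; rewrite ?inE //; lia].
have [c colA] := (b_colorableP A (ltn_ord k)).1 bk.
by exists A, c.
Qed.

Lemma bchrom_r_le_card (S : {set T}) : bchrom_r e S <= #|S|.
Proof.
have [A [c [AS colA]]] := bchrom_r_witness S.
exact: leq_trans (bcoloring_card colA) (subset_leq_card AS).
Qed.

Lemma leq_clique_bchrom_r (S B : {set T}) :
  B \subset S -> clique B -> #|B| <= bchrom_r e S.
Proof. by move=> BS /clique_bcoloring [c colB]; apply: leq_bchrom_r BS colB. Qed.

Lemma bchrom_r_ge2P (S : {set T}) :
  2 <= bchrom_r e S <-> exists x y, [/\ x \in S, y \in S & e x y].
Proof.
split=> [|[x [y [xS yS exy]]]].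
  have [A [c [AS [_ _ bv]]]] := bchrom_r_witness S => p2.
  have [x xA [cx bx]] := bv 1 ltac:(lia).
  have [y yA [exy _]] := bx 2 ltac:(lia) ltac:(by rewrite cx).
  by exists x, y; split; rewrite ?(subsetP AS).
have xyS : [set x; y] \subset S by rewrite subUset !sub1set xS yS.
by have := leq_clique_bchrom_r xyS (clique2 exy); rewrite cards2 edge_neq.
Qed.

Lemma bcoloring_of_b_atom (S : {set T}) t : b_atom e S t -> exists c, bcoloring S t c.
Proof.
case/existsP=> D /existsP[cv /and5P[/forallP cover /forallP disj /forallP cvD
  /forallP indep /andP[_ /forallP dom]]].
pose col x := if [pick i | x \in D i] is Some i then (i : nat).+1 else 0.
have colD i x : x \in D i -> col x = i.+1.
  rewrite /col; case: pickP => [j xj | none] xi; last by have := none i; rewrite xi.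
  have [-> // | ji] := eqVneq j i.
  by have /implyP/(_ ji) := forallP (disj j) i => /disjointFr/(_ xj); rewrite xi.
have inD x : x \in S -> exists i, x \in D i by rewrite (eqP (cover x)) => /existsP.
have DS i x : x \in D i -> x \in S.
  by move=> xi; rewrite (eqP (cover x)); apply/existsP; exists i.
have ordS i : 0 < i <= t -> exists j : 'I_t, j.+1 = i.
  move=> it; have ji : i.-1 < t by lia.
  exists (Ordinal ji); rewrite /= prednK //; lia.
exists col; split.
- by move=> x /inD[i xi]; rewrite (colD _ _ xi) ltn_ord.
- move=> x y /inD[i xi] /inD[j yj]; rewrite (colD _ _ xi) (colD _ _ yj) eqSS.
  apply: contraTneq => /val_inj ij; rewrite -{}ij in yj.
  by have /forall_inP/(_ x xi)/forall_inP/(_ y yj) := indep i.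
move=> _ /ordS[i <-]; exists (cv i); first exact: DS (cvD i).
split=> [|_ /ordS[j <-]]; first exact: colD (cvD i).
rewrite (colD _ _ (cvD i)) eqSS => ji.
have /implyP := forallP (dom i) j; rewrite -(inj_eq val_inj) eq_sym ji.
by case/(_ isT)/exists_inP=> y yj eiy; exists y; [apply: DS yj | rewrite (colD _ _ yj)].
Qed.

(* The three classes of the atom are the b-vertices of colours 1, 2, 3
   together with the neighbours of the other two witnessing that colour. *)
Lemma b_atom_of_bcoloring (A : {set T}) k c :
  bcoloring A k c -> 3 <= k -> exists S, b_atom e S 3.
Proof.
move=> [_ cP bv] k3.
have [K1 K2 K3] : [/\ 0 < 1 <= k, 0 < 2 <= k & 0 < 3 <= k] by split; lia.
have [x1 x1A [c1 b1]] := bv 1 K1.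
have [x2 x2A [c2 b2]] := bv 2 K2.
have [x3 x3A [c3 b3]] := bv 3 K3.
have [y12 y12A [e12 c12]] := b1 2 K2 ltac:(by rewrite c1).
have [y13 y13A [e13 c13]] := b1 3 K3 ltac:(by rewrite c1).
have [y21 y21A [e21 c21]] := b2 1 K1 ltac:(by rewrite c2).
have [y23 y23A [e23 c23]] := b2 3 K3 ltac:(by rewrite c2).
have [y31 y31A [e31 c31]] := b3 1 K1 ltac:(by rewrite c3).
have [y32 y32A [e32 c32]] := b3 2 K2 ltac:(by rewrite c3).
pose s := [:: x1; x2; x3; y12; y13; y21; y23; y31; y32].
have sA : {subset s <= A} by apply/allP; rewrite /= x1A x2A x3A y12A y13A y21A y23A y31A y32A.
pose D := [ffun i : 'I_3 => [set z in s | c z == i.+1]].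
pose cv := [ffun i : 'I_3 => nth x1 [:: x1; x2; x3] i].
have DA i z : z \in D i -> z \in A /\ c z = i.+1.
  by rewrite ffunE inE => /andP[/sA zA /eqP].
have inD (i : 'I_3) z : z \in s -> c z = i.+1 -> z \in D i.
  by move=> zs cz; rewrite ffunE inE zs cz eqxx.
exists [set z | [exists i, z \in D i]]; apply/existsP; exists D; apply/existsP; exists cv.
apply/and5P; split; last (apply/andP; split).
- by apply/forallP=> z; rewrite inE.
- apply/forallP=> i; apply/forallP=> j; apply/implyP=> ij.
  rewrite -setI_eq0; apply: contraTT ij => /set0Pn[z]; rewrite inE negbK.
  by case/andP=> /DA[_ cz] /DA[_]; rewrite cz => /succn_inj/val_inj ->.
- by apply/forallP=> -[[|[|[|//]]] i3]; rewrite ffunE inD ?inE ?eqxx ?orbT.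
- apply/forallP=> i; apply/forall_inP=> x /DA[xA cx]; apply/forall_inP=> y /DA[yA cy].
  by apply/negP => /(cP x y xA yA); rewrite cx cy eqxx.
- apply/forallP=> i; rewrite ffunE.
  have -> : [set z in s | c z == i.+1] = [set z in [seq z <- s | c z == i.+1]].
    by apply/setP=> z; rewrite !in_set mem_filter andbC.
  rewrite cardsE (leq_trans (card_size _)) // size_filter /=.
  by rewrite c1 c2 c3 c12 c13 c21 c23 c31 c32; case: i => [[|[|[|//]]] i3].
apply/forallP=> -[[|[|[|//]]] i3]; apply/forallP=> -[[|[|[|//]]] j3]; apply/implyP;
  rewrite -(inj_eq val_inj) //= => _; rewrite !ffunE; apply/exists_inP.
- by exists y12; [rewrite !inE c12 eqxx ?orbT | exact: e12].
- by exists y13; [rewrite !inE c13 eqxx ?orbT | exact: e13].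
- by exists y21; [rewrite !inE c21 eqxx ?orbT | exact: e21].
- by exists y23; [rewrite !inE c23 eqxx ?orbT | exact: e23].
- by exists y31; [rewrite !inE c31 eqxx ?orbT | exact: e31].
- by exists y32; [rewrite !inE c32 eqxx ?orbT | exact: e32].
Qed.

Lemma exists_minimal_b_atom (S : {set T}) t :
  b_atom e S t -> exists S', minimal_b_atom e S' t.
Proof.
elim: {S}#|S| {-2}S (leqnn #|S|) => [|n IH] S Sn atomS.
  exists S; rewrite /minimal_b_atom atomS; apply/forall_inP => A /proper_card.
  by rewrite ltnNge (leq_trans Sn).
have [minS | ] := boolP [forall A : {set T}, (A \proper S) ==> ~~ b_atom e A t].
  by exists S; rewrite /minimal_b_atom atomS.
rewrite negb_forall => /existsP[A]; rewrite negb_imply negbK => /andP[AS atomA].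
by apply: IH atomA; rewrite -ltnS (leq_trans (proper_card AS)).
Qed.

(* A triangle avoiding the common vertex x lies in the two wings, so it
   contains one wing and a vertex of the other, which together with the
   first triangle spans a K4. *)
Lemma K4_of_bowtie (T0 T1 Tx : {set T}) x :
  #|T| <= 5 -> clique T0 -> clique T1 -> clique Tx ->
  #|T0| = 3 -> #|T1| = 3 -> #|Tx| = 3 -> T0 :&: T1 = [set x] -> x \notin Tx ->
  exists B, clique B /\ #|B| = 4.
Proof.
move=> T5 c0 c1 cx n0 n1 nx I01 xTx.
have /andP[xT0 xT1] : (x \in T0) && (x \in T1) by rewrite -in_setI I01 set11.
have U01 : T0 :|: T1 = setT.
  apply/eqP; rewrite eqEcard subsetT cardsT.
  by have := cardsUI T0 T1; rewrite I01 cards1 n0 n1; lia.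
have cover : 3 <= #|Tx :&: T0| + #|Tx :&: T1|.
  by rewrite -nx -{1}(setIT Tx) -U01 setIUr cardsU leq_subr.
have cardD (Ti : {set T}) : x \in Ti -> #|Ti| = 3 -> #|Ti :\ x| = 2.
  by move=> xTi nTi; have := cardsD1 x Ti; rewrite xTi nTi; lia.
have subD (Ti : {set T}) : Tx :&: Ti \subset Ti :\ x.
  apply/subsetP=> y; rewrite !inE => /andP[yTx ->]; rewrite andbT.
  by apply: contraNneq xTx => <-.
have le2 (Ti : {set T}) : x \in Ti -> #|Ti| = 3 -> #|Tx :&: Ti| <= 2.
  by move=> xTi nTi; rewrite -(cardD Ti xTi nTi) subset_leq_card.
wlog two0 : T0 T1 c0 c1 n0 n1 I01 xT0 xT1 U01 cover / 2 <= #|Tx :&: T0|.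
  move=> sym; have [two0 | one0] := leqP 2 #|Tx :&: T0|; first exact: (sym T0 T1).
  apply: (sym T1 T0); rewrite // 1?[T1 :&: T0]setIC 1?[T1 :|: T0]setUC 1?addnC //.
  by have := le2 T1 xT1 n1; lia.
have sub0 : T0 :\ x \subset Tx.
  suff /eqP <- : Tx :&: T0 == T0 :\ x by apply: subsetIl.
  by rewrite eqEcard subD cardD.
have [w] : exists w, w \in Tx :&: T1.
  by apply/card_gt0P; have := le2 T0 xT0 n0; lia.
rewrite inE => /andP[wTx wT1].
have wT0 : w \notin T0.
  apply: contraNN xTx => wT0; have : w \in T0 :&: T1 by rewrite inE wT0.
  by rewrite I01 inE => /eqP <-.
exists (w |: T0); split; last by rewrite cardsU1 wT0 n0.
apply: clique_setU1 => // y yT0; have [-> | yx] := eqVneq y x.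
  by apply: c1 => //; apply: contraNneq xTx => <-.
apply: cx => //; first by apply: (subsetP sub0); rewrite !inE yx.
by apply: contraNneq wT0 => ->.
Qed.

(* If two of the triangles met in a single vertex we would have a bowtie;
   otherwise each triangle avoiding [v \in T0] is [T0 :\ v] plus an apex
   whose neighbourhood in [T0] is exactly [T0 :\ v], and these three
   distinct neighbourhoods need three apexes among the at most two
   vertices outside [T0]. *)
Lemma K4_of_deletion_triangles (x0 : T) :
  #|T| <= 5 -> (forall v, exists B, [/\ clique B, #|B| = 3 & v \notin B]) ->
  exists B, clique B /\ #|B| = 4.
Proof.
move=> T5 tri; have [T0 [c0 n0 _]] := tri x0; apply: NNPP => noK4.
pose nbh w := T0 :&: [set y | e w y].
have apex v : v \in T0 -> exists2 w, w \notin T0 & nbh w = T0 :\ v.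
  move=> vT0; have [Tv [cv nv vTv]] := tri v.
  have nD : #|T0 :\ v| = 2 by have := cardsD1 v T0; rewrite vT0 n0; lia.
  have subD : T0 :&: Tv \subset T0 :\ v.
    apply/subsetP=> y; rewrite !inE => /andP[-> yTv]; rewrite andbT.
    by apply: contraNneq vTv => <-.
  have not1 : #|T0 :&: Tv| != 1.
    apply/negP => /cards1P[x I0v]; have [Tx [cx nx xTx]] := tri x.
    by apply: noK4; apply: (K4_of_bowtie T5 c0 cv cx n0 nv nx I0v xTx).
  have I0v : T0 :&: Tv = T0 :\ v.
    apply/eqP; rewrite eqEcard subD nD.
    have := cardsUI T0 Tv; have := max_card (T0 :|: Tv); rewrite n0 nv; lia.
  have [w] : exists w, w \in Tv :\: T0.
    by apply/card_gt0P; have := cardsID T0 Tv; rewrite setIC I0v nD nv; lia.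
  rewrite inE => /andP[wT0 wTv]; exists w => //.
  have adj : {in T0 :\ v, forall y, e w y}.
    move=> y yD; apply: cv => //; first by rewrite -I0v inE in yD; case/andP: yD.
    by apply: contraNneq wT0 => ->; move: yD; rewrite inE => /andP[].
  have nwv : ~~ e w v.
    apply/negP => ewv; apply: noK4; exists (w |: T0); split; last by rewrite cardsU1 wT0 n0.
    apply: clique_setU1 => // y yT0; have [-> // | yv] := eqVneq y v.
    by apply: adj; rewrite !inE yv.
  apply/setP=> y; rewrite !inE; have [-> | yv] //= := eqVneq y v.
    by rewrite (negbTE nwv) andbF.
  by case: (boolP (y \in T0)) => // yT0; apply: adj; rewrite !inE yv.
have inj : {in T0 &, injective (fun v => T0 :\ v)}.
  move=> u v uT0 vT0 Duv; apply/eqP; apply: contraT => uv.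
  by have := setD11 u T0; rewrite Duv !inE uv uT0.
have : [set T0 :\ v | v in T0] \subset [set nbh w | w in ~: T0].
  apply/subsetP=> _ /imsetP[v vT0 ->]; have [w wT0 <-] := apex v vT0.
  by apply: imset_f; rewrite inE.
have nC : #|~: T0| <= 2 by rewrite -(leq_add2l 3) -{1}n0 cardsC.
move/subset_leq_card; rewrite card_in_imset // n0 => /leq_trans/(_ (leq_imset_card _ _)).
by move/leq_trans/(_ nC).
Qed.

Lemma bchrom_r_le2_of_deletions (x0 : T) :
  #|T| <= 5 -> (forall v, bchrom_r e (setT :\ v) = bchrom_r e setT) ->
  bchrom_r e setT <= 2.
Proof.
move=> T5 del; set p := bchrom_r e setT in del *; rewrite leqNgt; apply/negP => p3.
have cardD (v : T) : #|setT :\ v| = #|T|.-1.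
  by rewrite -cardsT (cardsD1 v setT) in_setT.
(* Each [G - v] has at most [4 <= p + 1] vertices, so its optimal
   b-colouring has its b-vertices pairwise adjacent. *)
have del_clique (v : T) m :
    m <= p -> exists B : {set T}, [/\ B \subset setT :\ v, clique B & #|B| = m].
  move=> mp; have [A [c [AD colA]]] := bchrom_r_witness (setT :\ v); rewrite del in colA.
  have Ap : #|A| <= p.+1 by have := subset_leq_card AD; rewrite cardD; lia.
  have [B [BA cB nB]] := bcoloring_clique colA Ap mp.
  by exists B; split=> //; apply: subset_trans AD.
have notin (v : T) (B : {set T}) : B \subset setT :\ v -> v \notin B.
  by move=> BD; apply/negP => /(subsetP BD); rewrite !inE eqxx.
have [K [cK nK]] : exists K, clique K /\ #|K| = 4.
  apply: (K4_of_deletion_triangles x0 T5) => v.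
  by have [B [BD cB nB]] := del_clique v 3 p3; exists B; split; rewrite ?notin.
have p4 : 4 <= p by rewrite -nK leq_clique_bchrom_r ?subsetT.
have pD : p <= #|T|.-1 by rewrite -(del x0) -(cardD x0) bchrom_r_le_card.
have complete : clique setT.
  move=> x y _ _ xy; have [v] : exists v, v \in ~: [set x; y].
    by apply/card_gt0P; have := cardsC [set x; y]; rewrite cards2 xy; lia.
  rewrite !inE negb_or => /andP[vx vy].
  have [B [BD cB nB]] := del_clique v p (leqnn p).
  have eB : B = setT :\ v by apply/eqP; rewrite eqEcard BD cardD nB; lia.
  by apply: cB; rewrite // eB !inE andbT eq_sym.
by have := leq_clique_bchrom_r (subsetT setT) complete; rewrite cardsT -/p; lia.
Qed.

Lemma disjoint_edges_of_deletions (x y : T) :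
  e x y -> (forall v, exists a b, [/\ a \in setT :\ v, b \in setT :\ v & e a b]) ->
  (forall a b c, e a b -> e b c -> e a c -> False) ->
  exists a b c d, [&& e a b, e c d, a != c, a != d, b != c & b != d].
Proof.
move=> exy del notri; apply: NNPP => no2K2.
have meet a b c d : e a b -> e c d -> [|| a == c, a == d, b == c | b == d].
  move=> eab ecd; apply: contraT; rewrite !negb_or => /and4P[ac ad bc bd].
  by case: no2K2; exists a, b, c, d; rewrite eab ecd ac ad bc bd.
have other u v : e u v -> exists2 w, e v w & w != u.
  move=> euv; have [a [b [+ + eab]]] := del u; rewrite !inE !andbT => au bu.
  have := meet _ _ _ _ euv eab; rewrite !(eq_sym u) (negbTE au) (negbTE bu) /=.
  by case/orP=> /eqP ->; [exists b | exists a; rewrite // esym].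
have [w yw wx] := other x y exy.
have [w' xw' w'y] := other y x ltac:(by rewrite esym).
have := meet _ _ _ _ yw xw'.
rewrite eq_sym (negbTE (edge_neq exy)) eq_sym (negbTE w'y) (negbTE wx) /= => /eqP ww'.
by apply: (notri x y w); rewrite // ww'.
Qed.

Lemma bchrom_r_ge3_of_triangle (a b c : T) :
  e a b -> e b c -> e a c -> 3 <= bchrom_r e setT.
Proof.
move=> eab ebc eac; have abc : a \notin [set b; c].
  by rewrite !inE negb_or !edge_neq.
have := leq_clique_bchrom_r (subsetT (a |: [set b; c])).
rewrite cardsU1 abc cards2 edge_neq //; apply; apply: clique_setU1 (clique2 ebc) _.
by move=> y /set2P[] ->.
Qed.

Lemma leq_b_atom_bchrom_r (X S : {set T}) t :
  S \subset X -> b_atom e S t -> t <= bchrom_r e X.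
Proof. by move=> SX /bcoloring_of_b_atom [c colS]; apply: leq_bchrom_r SX colS. Qed.

Lemma bchrom_r_le2 (X : {set T}) :
  ~ (exists S, minimal_b_atom e S 3) -> bchrom_r e X <= 2.
Proof.
move=> noatom; rewrite leqNgt; apply/negP => p3.
have [A [c [_ colA]]] := bchrom_r_witness X.
have [S atomS] := b_atom_of_bcoloring colA p3.
exact: noatom (exists_minimal_b_atom atomS).
Qed.

Lemma bchrom_r_setD1_ge2 (a b c d v : T) :
  [&& e a b, e c d, a != c, a != d, b != c & b != d] -> 2 <= bchrom_r e (setT :\ v).
Proof.
case/and5P=> eab ecd ac ad /andP[bc bd]; apply/bchrom_r_ge2P.
have [/set2P vab | ] := boolP (v \in [set a; b]).
  by exists c, d; case: vab => ->; split; rewrite ?in_setD1 ?in_setT // andbT eq_sym.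
rewrite !inE negb_or => /andP[va vb].
by exists a, b; split; rewrite ?in_setD1 ?in_setT // andbT eq_sym.
Qed.

End BColorings.

Theorem mainTheorem13 (T : finType) (e : rel T) :
  simple_graph e ->
  (4 <= #|T| <= 5)%N ->
  (exists x y : T, e x y) ->
  (forall v : T,
     bchrom_r e (setT :\ v) = (bchrom_r e setT + #|T| %/ 2 - 2)%N)
  <->
  ((exists a b c d : T,
      [&& e a b, e c d, a != c, a != d, b != c & b != d])
   /\ ~ (exists S : {set T}, minimal_b_atom e S 3)).
Proof.
move=> [esym eirr] /andP[n4 n5] [x0 [y0 e0]].
have half : #|T| %/ 2 = 2 by have [->|->] : #|T| = 4 \/ #|T| = 5 by lia.
have edge2 : 2 <= bchrom_r e setT by apply/(bchrom_r_ge2P esym eirr); exists x0, y0.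
split=> [H | [[a [b [c [d abcd]]]] noatom] v]; last first.
  have eq2 X : 2 <= bchrom_r e X -> bchrom_r e X = 2.
    by move=> ge2; apply/eqP; rewrite eqn_leq bchrom_r_le2.
  by rewrite half addnK (eq2 _ edge2) eq2 // (bchrom_r_setD1_ge2 esym eirr _ abcd).
have del v : bchrom_r e (setT :\ v) = bchrom_r e setT by rewrite H half addnK.
have le2 := bchrom_r_le2_of_deletions esym eirr x0 n5 del.
split; last by case=> S /andP[atomS _]; have := leq_b_atom_bchrom_r (subsetT S) atomS; lia.
apply: (disjoint_edges_of_deletions esym eirr e0) => [v | a b c eab ebc eac].
  by apply/(bchrom_r_ge2P esym eirr); rewrite del.
by have := bchrom_r_ge3_of_triangle esym eirr eab ebc eac; lia.
Qed.
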